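(* Let $\Sigma=\{\sigma_{\mathbf{a}|\mathbf{x}}\}$ be a no-signaling assemblage of operators acting on $\mathbb{C}^d$. If there exists a local deterministic box $L$ such that $\sum_{\mathbf{a}|\mathbf{x}\in I_L}\mathrm{rank}(\sigma_{\mathbf{a}|\mathbf{x}})>(|I_L|-1)d$, then $\Sigma$ is not on the edge of the set of no-signaling assemblages.
   Context: Fix $n\ge 1$, integers $\mathcal{A}_i,\mathcal{X}_i\ge 1$ and $d\ge1$; write $\mathbf{a}|\mathbf{x}=a_1\dots a_n|x_1\dots x_n$ with $a_i\in\{0,\dots,\mathcal{A}_i-1\}$, $x_i\in\{0,\dots,\mathcal{X}_i-1\}$. A no-signaling assemblage is a collection of positive semidefinite operators $\sigma_{\mathbf{a}|\mathbf{x}}$ on $\mathbb{C}^d$ with $\sum_{\mathbf{a}}\sigma_{\mathbf{a}|\mathbf{x}}=\rho_B$ for all $\mathbf{x}$ ($\rho_B$ a fixed density operator) and such that for every $I=\{i_1,\dots,i_s\}\subset\{1,\dots,n\}$, $1\le s<n$, the sum $\sum_{a_j:\,j\notin I}\sigma_{\mathbf{a}|\mathbf{x}}$ depends only on $a_{i_k},x_{i_k}$. A local deterministic box $L$ is given by functions $f_i:\{0,\dots,\mathcal{X}_i-1\}\to\{0,\dots,\mathcal{A}_i-1\}$ via $p_L(\mathbf{a}|\mathbf{x})=\prod_i\delta_{a_i,f_i(x_i)}$; $I_L=\{\mathbf{a}|\mathbf{x}:p_L(\mathbf{a}|\mathbf{x})\ne0\}$ (so $|I_L|=\prod_i\mathcal{X}_i$).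 An LHS assemblage is one of the form $\sigma_{\mathbf{a}|\mathbf{x}}=\sum_j q_j\prod_i p^{(A_i)}_j(a_i|x_i)\rho_j$ with probability weights $q_j$, density operators $\rho_j$ and conditional distributions $p^{(A_i)}_j$. $\Sigma$ is on the edge if any decomposition $\Sigma=\epsilon\Sigma_1+(1-\epsilon)\Sigma_2$ with $\epsilon\in[0,1]$, $\Sigma_1$ LHS and $\Sigma_2$ no-signaling forces $\epsilon=0$. *)

(* Operators on C^d are d x d matrices over C = R[i]. *)
From HB Require Import structures.
From mathcomp Require Import all_boot all_order all_algebra.
From mathcomp Require Export complex.
Set Implicit Arguments. Unset Strict Implicit. Unset Printing Implicit Defensive.
Import Order.TTheory GRing.Theory Num.Theory.
Local Open Scope ring_scope.

Section Assemblages.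
Variable C : numClosedFieldType.

Definition adjmx m n (M : 'M[C]_(m, n)) : 'M[C]_(n, m) := (map_mx Num.conj M)^T.

Definition psd d (M : 'M[C]_d) : Prop :=
  adjmx M = M /\ forall v : 'rV[C]_d, 0 <= (v *m M *m adjmx v) 0 0.

Definition density d (M : 'M[C]_d) : Prop := psd M /\ \tr M = 1.

Variables (n : nat) (A X : 'I_n -> nat).

(* outcome strings a = a_1..a_n and setting strings x = x_1..x_n *)
Definition outs := {dffun forall i : 'I_n, 'I_(A i)}.
Definition sets := {dffun forall i : 'I_n, 'I_(X i)}.

Variable d : nat.

Definition assemblage := outs -> sets -> 'M[C]_d.

Definition no_signaling (sigma : assemblage) : Prop :=
  (forall a x, psd (sigma a x)) /\
  (exists rhoB : 'M[C]_d, density rhoB /\ forall x, \sum_(a : outs) sigma a x = rhoB) /\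
  (forall I : {set 'I_n}, (0 < #|I|)%N -> (#|I| < n)%N ->
     forall (a : outs) (x x' : sets), (forall i, i \in I -> x i = x' i) ->
       \sum_(b : outs | [forall i in I, b i == a i]) sigma b x
       = \sum_(b : outs | [forall i in I, b i == a i]) sigma b x').

Definition LHS_assemblage (sigma : assemblage) : Prop :=
  exists (m : nat) (q : 'I_m -> C) (rho : 'I_m -> 'M[C]_d)
         (p : 'I_m -> forall i : 'I_n, 'I_(X i) -> 'I_(A i) -> C),
    (forall j, 0 <= q j) /\ \sum_j q j = 1 /\
    (forall j, density (rho j)) /\
    (forall j i xi ai, 0 <= p j i xi ai) /\
    (forall j i xi, \sum_(ai : 'I_(A i)) p j i xi ai = 1) /\
    (forall a x, sigma a x = \sum_j (q j * \prod_i p j i (x i) (a i)) *: rho j).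

Definition on_edge (sigma : assemblage) : Prop :=
  forall (eps : C) (s1 s2 : assemblage),
    0 <= eps -> eps <= 1 -> LHS_assemblage s1 -> no_signaling s2 ->
    (forall a x, sigma a x = eps *: s1 a x + (1 - eps) *: s2 a x) ->
    eps = 0.

(* support I_L of the local deterministic box given by f = (f_1..f_n) *)
Definition IL (f : forall i : 'I_n, 'I_(X i) -> 'I_(A i)) : {set outs * sets} :=
  [set ax : outs * sets | [forall i, ax.1 i == f i (ax.2 i)]].

End Assemblages.

From HB Require Import structures.
From mathcomp Require Import all_boot all_order all_algebra complex ring zify.
Import Order.TTheory GRing.Theory Num.Theory.
Set Implicit Arguments. Unset Strict Implicit. Unset Printing Implicit Defensive.
Local Open Scope ring_scope.

(* If the ranks of the sigma_{a|x}, (a|x) in I_L, add up to more than (|I_L| - 1) d, their row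
   spaces share a nonzero vector psi.  Each of these sigma_{a|x} then dominates a small multiple
   eps of the projector P onto psi, so sigma - eps (L (x) P) is still positive.  Since L (x) P is
   LHS and subtracting it preserves the no-signaling marginals, rescaling the remainder writes
   sigma = eps (L (x) P) + (1 - eps) sigma' with eps > 0. *)

Section PositiveSemidefinite.
Variable C : numClosedFieldType.

Lemma adjmxM m n p (M : 'M[C]_(m, n)) (N : 'M[C]_(n, p)) :
  adjmx (M *m N) = adjmx N *m adjmx M.
Proof. by rewrite /adjmx map_mxM trmx_mul. Qed.

Lemma adjmxD m n (M N : 'M[C]_(m, n)) : adjmx (M + N) = adjmx M + adjmx N.
Proof. by rewrite /adjmx map_mxD linearD. Qed.

Lemma adjmxB m n (M N : 'M[C]_(m, n)) : adjmx (M - N) = adjmx M - adjmx N.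
Proof. by rewrite /adjmx map_mxB linearB. Qed.

Lemma adjmxZ m n a (M : 'M[C]_(m, n)) : adjmx (a *: M) = a^* *: adjmx M.
Proof. by rewrite /adjmx map_mxZ linearZ. Qed.

Lemma adjmxK m n (M : 'M[C]_(m, n)) : adjmx (adjmx M) = M.
Proof. by apply/matrixP => i j; rewrite !mxE conjCK. Qed.

Lemma adjmx11 (M : 'M[C]_1) : adjmx M 0 0 = (M 0 0)^*.
Proof. by rewrite !mxE. Qed.

Definition mxform d (M : 'M[C]_d) (u v : 'rV[C]_d) := (u *m M *m adjmx v) 0 0.

Lemma mxform_adj d (M : 'M[C]_d) u v : adjmx M = M -> mxform M v u = (mxform M u v)^*.
Proof. by move=> hM; rewrite -adjmx11 !adjmxM adjmxK hM mulmxA. Qed.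

Lemma mxformDZl d (M : 'M[C]_d) s t u u' v :
  mxform M (s *: u + t *: u') v = s * mxform M u v + t * mxform M u' v.
Proof. by rewrite /mxform !mulmxDl -!scalemxAl !mxE. Qed.

Lemma mxformDZr d (M : 'M[C]_d) s t u v v' :
  mxform M u (s *: v + t *: v') = s^* * mxform M u v + t^* * mxform M u v'.
Proof. by rewrite /mxform adjmxD !adjmxZ !mulmxDr -!scalemxAr !mxE. Qed.

Lemma conj_ge0 (k : C) : 0 <= k -> k^* = k.
Proof. by move=> /ger0_real/CrealP. Qed.

(* Positivity at [(c + 1) v - b u], where [b = mxform M v u] and [c = mxform M u u]. *)
Lemma psd_cauchy_schwarz_weak d (M : 'M[C]_d) u v : psd M ->
  mxform M v u * (mxform M v u)^* <= (mxform M u u + 1) ^+ 2 * mxform M v v.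
Proof.
move=> [hM M_ge0].
set b := mxform M v u; set c := mxform M u u; set a := mxform M v v.
have c_ge0 : 0 <= c := M_ge0 u.
have bb_ge0 : 0 <= b * b^* := mul_conjC_ge0 b.
have s_conj : (c + 1)^* = c + 1 by rewrite conj_ge0 // addr_ge0.
have := M_ge0 ((c + 1) *: v + (- b) *: u).
have -> : (((c + 1) *: v + (- b) *: u) *m M *m adjmx ((c + 1) *: v + (- b) *: u)) 0 0
    = (c + 1) ^+ 2 * a - (c + 2%:R) * (b * b^*).
  rewrite -/(mxform _ _ _) mxformDZl !mxformDZr s_conj (mxform_adj v u hM) -/a -/b -/c.
  by rewrite rmorphN; ring.
rewrite subr_ge0; apply: le_trans.
by rewrite -[leLHS]mul1r ler_wpM2r // -addn1 natrD addrA lerDr addr_ge0.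
Qed.

Lemma psd_subr_outer d (M : 'M[C]_d) (u : 'rV[C]_d) (lam : C) : psd M -> 0 <= lam ->
  lam * (mxform M u u + 1) ^+ 2 <= 1 ->
  psd (M - lam *: (adjmx (u *m M) *m (u *m M))).
Proof.
move=> M_psd lam_ge0 lam_small; have [hM M_ge0] := M_psd; split.
  by rewrite adjmxB adjmxZ adjmxM adjmxK conj_ge0 // hM.
move=> v.
have -> : (v *m (M - lam *: (adjmx (u *m M) *m (u *m M))) *m adjmx v) 0 0
    = mxform M v v - lam * (mxform M v u * mxform M u v).
  rewrite mulmxBr mulmxBl -scalemxAr -scalemxAl adjmxM hM !mulmxA.
  rewrite -(mulmxA (v *m M *m adjmx u) u) -(mulmxA (v *m M *m adjmx u) (u *m M)).
  have mx11E (X Y Z : 'M[C]_1) : (X - lam *: (Y *m Z)) 0 0 = X 0 0 - lam * (Y 0 0 * Z 0 0).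
    by rewrite !mxE big_ord1.
  exact: mx11E.
rewrite (mxform_adj v u hM) subr_ge0.
apply: le_trans (ler_wpM2l lam_ge0 (psd_cauchy_schwarz_weak u v M_psd)) _.
by rewrite mulrA; apply: ler_piMl; [exact: M_ge0 | exact: lam_small].
Qed.

Lemma psd0 d : psd (0 : 'M[C]_d).
Proof.
split; first by apply/matrixP => i j; rewrite !mxE rmorph0.
by move=> v; rewrite mulmx0 mul0mx mxE.
Qed.

Lemma psdD d (M N : 'M[C]_d) : psd M -> psd N -> psd (M + N).
Proof.
move=> [hM M_ge0] [hN N_ge0]; split; first by rewrite adjmxD hM hN.
by move=> v; rewrite mulmxDr mulmxDl mxE addr_ge0.
Qed.

Lemma psdZ d (M : 'M[C]_d) k : 0 <= k -> psd M -> psd (k *: M).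
Proof.
move=> k_ge0 [hM M_ge0]; split; first by rewrite adjmxZ hM conj_ge0.
by move=> v; rewrite -scalemxAr -scalemxAl mxE mulr_ge0.
Qed.

Lemma psd_sum d (I : finType) (P : pred I) (F : I -> 'M[C]_d) :
  (forall i, P i -> psd (F i)) -> psd (\sum_(i | P i) F i).
Proof. by move=> F_psd; apply: big_ind => //; [exact: psd0 | exact: psdD]. Qed.

Lemma psd_outer d (w : 'rV[C]_d) : psd (adjmx w *m w).
Proof.
split; first by rewrite adjmxM adjmxK.
move=> v; rewrite mulmxA -(mulmxA (v *m _)) mxE big_ord1.
by rewrite -[(w *m _) 0 0]conjCK -adjmx11 adjmxM adjmxK mul_conjC_ge0.
Qed.

Lemma mulmx_adj_gt0 d (w : 'rV[C]_d) : w != 0 -> 0 < (w *m adjmx w) 0 0.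
Proof.
move=> w_neq0; have [j wj_neq0] : exists j, w 0 j != 0.
  apply/existsP; apply: contra_neqT w_neq0 => /existsPn w_eq0.
  by apply/rowP => j; rewrite mxE; apply/eqP/negPn.
rewrite mxE (bigD1 j) //= ltr_wpDr ?sumr_ge0 // => [k _|];
  by rewrite !mxE ?mul_conjC_ge0 ?mul_conjC_gt0.
Qed.

Lemma density_outer d (w : 'rV[C]_d) : w != 0 ->
  density (((w *m adjmx w) 0 0)^-1 *: (adjmx w *m w)).
Proof.
move=> /mulmx_adj_gt0 w_gt0; split; first by apply: psdZ (psd_outer w); rewrite invr_ge0 ltW.
by rewrite mxtraceZ mxtrace_mulC /mxtrace big_ord1 mulVf ?lt0r_neq0.
Qed.

Lemma psd_subr_outer_uniform d (I : finType) (P : {pred I}) (M : I -> 'M[C]_d)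
    (w : 'rV[C]_d) :
  (forall i, i \in P -> psd (M i)) -> (forall i, i \in P -> (w <= M i)%MS) ->
  exists2 delta, 0 < delta & forall i lam, i \in P -> 0 <= lam -> lam <= delta ->
    psd (M i - lam *: (adjmx w *m w)).
Proof.
move=> M_psd w_sub.
pose c i := (mxform (M i) (w *m pinvmx (M i)) (w *m pinvmx (M i)) + 1) ^+ 2.
have c_ge0 i : i \in P -> 0 <= c i.
  by move=> iP; rewrite exprn_ge0 // addr_ge0 //; exact: (M_psd i iP).2.
have K_ge0 : 0 <= \sum_(i in P) c i by exact: sumr_ge0.
exists (1 + \sum_(i in P) c i)^-1; first by rewrite invr_gt0 ltr_wpDr.
move=> i lam iP lam_ge0 lam_le; rewrite -(mulmxKpV (w_sub i iP)).
apply: psd_subr_outer => //; first exact: M_psd.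
apply: le_trans (ler_wpM2r (c_ge0 i iP) lam_le) _.
rewrite mulrC ler_pdivrMr ?ltr_wpDr // mul1r (bigD1 i) //= addrCA lerDl.
by rewrite addr_ge0 // sumr_ge0 // => j /andP[jP _]; exact: c_ge0.
Qed.
End PositiveSemidefinite.

Section RankOfIntersection.
Variables (F : fieldType) (d : nat).

Lemma mxrank_bigcap_seq (I : Type) (r : seq I) (B : I -> 'M[F]_d) :
  (\sum_(i <- r) \rank (B i) + d <= \rank (\bigcap_(i <- r) B i)%MS + size r * d)%N.
Proof.
elim: r => [|i r IHr]; first by rewrite !big_nil mxrank1; lia.
rewrite !big_cons /= mulSn; set U := (\bigcap_(j <- r) B j)%MS in IHr *.
have := mxrank_sum_cap (B i) U; have := rank_leq_col (B i + U)%MS.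
lia.
Qed.

Lemma bigcapmx_neq0 (I : finType) (P : {pred I}) (B : I -> 'M[F]_d) :
  ((#|P| - 1) * d < \sum_(i in P) \rank (B i))%N -> (\bigcap_(i in P) B i)%MS != 0.
Proof.
have := mxrank_bigcap_seq (enum P) B.
rewrite big_enum [in X in (_ <= \rank X + _)%N]big_enum -cardE /= -mxrank_eq0.
rewrite mulnBl mul1n; lia.
Qed.
End RankOfIntersection.

Section DeterministicBoxes.
Variables (C : numClosedFieldType) (n : nat) (A X : 'I_n -> nat) (d : nat).
Implicit Types (sigma tau : assemblage C A X d) (f : forall i : 'I_n, 'I_(X i) -> 'I_(A i)).

Definition det_outs f (x : sets X) : outs A := [ffun i => f i (x i)].

Lemma mem_IL f (a : outs A) (x : sets X) : ((a, x) \in IL f) = (a == det_outs f x).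
Proof.
rewrite inE; apply/forallP/eqP => [a_eq | -> i]; last by rewrite ffunE.
by apply/ffunP => i; rewrite ffunE; apply/eqP/a_eq.
Qed.

Definition det_assemblage f (P : 'M[C]_d) : assemblage C A X d :=
  fun a x => if a == det_outs f x then P else 0.

Lemma sum_det_assemblage f P x (Q : pred (outs A)) :
  \sum_(b | Q b) det_assemblage f P b x = if Q (det_outs f x) then P else 0.
Proof.
rewrite -big_mkcondr /=; case: ifP => Qa.
  by apply: (big_pred1 (det_outs f x)) => b /=; rewrite andbC; case: eqP => [->|].
by apply: big_pred0 => b; case: eqP => [->|]; rewrite ?Qa ?andbF.
Qed.

Lemma det_assemblage_LHS f P : density P -> LHS_assemblage (det_assemblage f P).
Proof.
move=> P_density.
exists 1%N, (fun=> 1), (fun=> P), (fun _ i xi ai => (ai == f i xi)%:R).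
split; first by move=> _; exact: ler01.
split; first by rewrite big_ord1.
split=> //.
split; first by move=> *; exact: ler0n.
split.
  move=> _ i xi; rewrite (bigD1 (f i xi)) //= eqxx big1 ?addr0 // => ai.
  by move/negbTE => ->.
move=> a x; rewrite big_ord1 mul1r /det_assemblage.
case: eqP => [-> | a_neq]; first by rewrite big1 ?scale1r // => i _; rewrite ffunE eqxx.
have [i ai_neq] : exists i, a i != f i (x i).
  apply/existsP; apply: contra_notT a_neq => /existsPn a_eq.
  by apply/ffunP => i; rewrite ffunE; apply/eqP/negPn.
by rewrite (bigD1 i) //= (negbTE ai_neq) mul0r scale0r.
Qed.

Definition marginals_agree sigma : Prop :=
  forall I : {set 'I_n}, (0 < #|I|)%N -> (#|I| < n)%N ->
    forall (a : outs A) (x x' : sets X), (forall i, i \in I -> x i = x' i) ->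
      \sum_(b : outs A | [forall i in I, b i == a i]) sigma b x
      = \sum_(b : outs A | [forall i in I, b i == a i]) sigma b x'.

Lemma marginals_agree_det f P : marginals_agree (det_assemblage f P).
Proof.
move=> I _ _ a x x' x_eq; rewrite !sum_det_assemblage.
suff -> : [forall i in I, det_outs f x i == a i] = [forall i in I, det_outs f x' i == a i].
  by [].
by apply: eq_forallb_in => i iI; rewrite !ffunE x_eq.
Qed.

Lemma marginals_agreeDZ s t sigma tau :
  marginals_agree sigma -> marginals_agree tau ->
  marginals_agree (fun a x => s *: sigma a x + t *: tau a x).
Proof.
move=> sigma_agree tau_agree I I_gt0 I_ltn a x x' x_eq.
by rewrite !big_split -!scaler_sumr /= (sigma_agree I _ _ a x x') ?(tau_agree I _ _ a x x').
Qed.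

Lemma no_signalingP sigma (x0 : sets X) (rho : 'M[C]_d) :
  (forall a x, psd (sigma a x)) -> (forall x, \sum_a sigma a x = rho) -> \tr rho = 1 ->
  marginals_agree sigma -> no_signaling sigma.
Proof.
move=> sigma_psd sigma_sum rho_tr sigma_agree.
split=> //; split=> //; exists rho; split=> //; split=> //.
by rewrite -(sigma_sum x0); apply: psd_sum.
Qed.

Lemma not_on_edge_of_det_part sigma f (P : 'M[C]_d) (eps : C) (x0 : sets X) :
  no_signaling sigma -> density P -> 0 < eps -> eps < 1 ->
  (forall x, psd (sigma (det_outs f x) x - eps *: P)) -> ~ on_edge sigma.
Proof.
move=> [sigma_psd [[rho [rho_density sigma_sum]] sigma_agree]] P_density.
move=> eps_gt0 eps_lt1 sigma_ge edge.
have c_gt0 : 0 < (1 - eps)^-1 by rewrite invr_gt0 subr_gt0.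
pose s1 := det_assemblage f P.
pose s2 a x := (1 - eps)^-1 *: sigma a x + (- ((1 - eps)^-1 * eps)) *: s1 a x.
have s2E a x : s2 a x = (1 - eps)^-1 *: (sigma a x - eps *: s1 a x).
  by rewrite /s2 scalerBr scalerA scaleNr.
have s2_psd a x : psd (s2 a x).
  rewrite s2E; apply: psdZ (ltW c_gt0) _; rewrite /s1 /det_assemblage.
  by case: eqP => [-> | _]; rewrite ?scaler0 ?subr0.
have s2_sum x : \sum_a s2 a x = (1 - eps)^-1 *: (rho - eps *: P).
  rewrite big_split -!scaler_sumr sigma_sum (sum_det_assemblage f P x xpredT) /=.
  by rewrite scalerBr scalerA scaleNr.
have rho2_tr : \tr ((1 - eps)^-1 *: (rho - eps *: P)) = 1.
  by rewrite linearZ linearB linearZ /= rho_density.2 P_density.2 mulr1 mulVf ?gt_eqF // subr_gt0.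
have s2_ns : no_signaling s2.
  apply: no_signalingP x0 _ s2_psd s2_sum rho2_tr _.
  exact: marginals_agreeDZ sigma_agree (marginals_agree_det f P).
suff eps0 : eps = 0 by rewrite eps0 ltxx in eps_gt0.
apply: edge (ltW eps_gt0) (ltW eps_lt1) (det_assemblage_LHS f P_density) s2_ns _ => a x.
by rewrite s2E scalerA mulfV ?gt_eqF ?subr_gt0 // scale1r addrC subrK.
Qed.
End DeterministicBoxes.

Theorem lemma3 (R : rcfType) (n : nat) (A X : 'I_n -> nat) (d : nat)
  (hn : (1 <= n)%N) (hA : forall i, (1 <= A i)%N) (hX : forall i, (1 <= X i)%N)
  (hd : (1 <= d)%N)
  (sigma : assemblage (R[i]) A X d)
  (hNS : no_signaling sigma)
  (f : forall i : 'I_n, 'I_(X i) -> 'I_(A i))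
  (hrank : ((#|IL f| - 1) * d < \sum_(ax in IL f) \rank (sigma ax.1 ax.2))%N) :
  ~ on_edge sigma.
Proof.
have sigma_psd := hNS.1.
set U := (\bigcap_(ax in IL f) sigma ax.1 ax.2)%MS.
have psi_neq0 : nz_row U != 0 by rewrite nz_row_eq0; exact: bigcapmx_neq0.
have psi_sub ax : ax \in IL f -> (nz_row U <= sigma ax.1 ax.2)%MS.
  move=> ax_in; apply: submx_trans (nz_row_sub U) _.
  by move: (submx_refl U) => /sub_bigcapmxP; apply.
have [delta delta_gt0 sigma_ge] :=
  psd_subr_outer_uniform (fun ax _ => sigma_psd ax.1 ax.2) psi_sub.
set psi := nz_row U in psi_neq0 sigma_ge.
set npsi := (psi *m adjmx psi) 0 0.
have delta_npsi_gt0 : 0 < delta * npsi by rewrite mulr_gt0 // mulmx_adj_gt0.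
pose eps := delta * npsi / (1 + delta * npsi).
pose x0 : sets X := [ffun i => Ordinal (hX i)].
apply: (not_on_edge_of_det_part (f := f) (eps := eps) x0 hNS (density_outer psi_neq0)).
- by rewrite divr_gt0 // addr_gt0.
- by rewrite ltr_pdivrMr ?addr_gt0 // mul1r ltrDr.
move=> x; rewrite scalerA; apply: (sigma_ge (det_outs f x, x)); first by rewrite mem_IL.
  by rewrite mulr_ge0 ?invr_ge0 ?ltW ?divr_gt0 ?addr_gt0 ?mulmx_adj_gt0.
have -> : eps * npsi^-1 = delta / (1 + delta * npsi).
  by rewrite /eps; field; rewrite ?gt_eqF ?addr_gt0 ?mulmx_adj_gt0.
by rewrite ler_pdivrMr ?addr_gt0 // ler_pMr // lerDl ltW.
Qed.
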